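(* For all $a\in\mathbb F_{3^m}^*$ and $b\in\mathbb F_{3^{2m}}$, the vector $(\mathrm{Tr}_{2m}(at^{3^m+1})\,\mathrm{Tr}_{2m}(bt))_{t\in\mathbb F_{3^{2m}}}$ belongs to $\mathcal C_3(\mathbb D_d)$.
   Context: Let $m\ge 2$ be an integer. For $s\in\{m,2m\}$ let $\mathrm{Tr}_s:\mathbb F_{3^s}\to\mathbb F_3$ denote the absolute trace. Vectors in $\mathbb F_3^{3^{2m}}$ are indexed by $\mathbb F_{3^{2m}}$, and a function $f:\mathbb F_{3^{2m}}\to\mathbb F_3$ is identified with $(f(t))_{t\in\mathbb F_{3^{2m}}}$. Let $\mathcal C(2m,3)=\{(\mathrm{Tr}_{2m}(at^{3^m+1}+bt)+h)_{t\in\mathbb F_{3^{2m}}}: a\in\mathbb F_{3^m}, b\in\mathbb F_{3^{2m}}, h\in\mathbb F_3\}$, let $d$ be its minimum nonzero Hamming weight, let $\mathbb D_d$ be the incidence structure on $\mathbb F_{3^{2m}}$ whose blocks are the supports of the weight-$d$ codewords, and let $\mathcal C_3(\mathbb D_d)$ be the $\mathbb F_3$-span of the incidence vectors of the blocks (entry $1$ on the block, $0$ elsewhere). *)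

From HB Require Import structures.
From mathcomp Require Import all_boot all_order all_algebra all_field.
Set Implicit Arguments. Unset Strict Implicit. Unset Printing Implicit Defensive.
Import GRing.Theory.
Local Open Scope ring_scope.

Section Defs.
Variable F : finFieldType.  (* intended: F = F_{3^{2m}} *)
Variable m : nat.

Definition TrF (x : F) : F := \sum_(i < (2 * m)%N) x ^+ (3 ^ i).

(* The same trace, read as an element of F_3 = 'F_3 (via the prime field of F). *)
Definition Tr3 (x : F) : 'F_3 :=
  odflt 0 [pick k : 'F_3 | ((k : nat)%:R : F) == TrF x].

Definition inFm (a : F) : bool := a ^+ (3 ^ m) == a.

Definition codeC : {set {ffun F -> 'F_3}} :=
  [set c | [exists a : F, exists b : F, exists h : 'F_3,
     inFm a && (c == [ffun t => Tr3 (a * t ^+ (3 ^ m + 1) + b * t) + h])]].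

Definition wt (c : {ffun F -> 'F_3}) : nat := #|[set t | c t != 0]|.

Definition min_weight_word (c : {ffun F -> 'F_3}) : bool :=
  [&& c \in codeC, c != 0 &
      [forall c' in codeC, (c' != 0) ==> (wt c <= wt c')%N]].

Definition blocksD : {set {set F}} :=
  [set [set t | c t != 0] | c : {ffun F -> 'F_3} in [set c | min_weight_word c]].

Definition incvec (S : {set F}) : {ffun F -> 'F_3} := [ffun t => (t \in S)%:R].

Definition in_code_of_design (v : {ffun F -> 'F_3}) : Prop :=
  exists lam : {set F} -> 'F_3,
    forall t : F, v t = \sum_(S in blocksD) lam S * incvec S t.

End Defs.

From HB Require Import structures.
From mathcomp Require Import all_boot all_order all_algebra all_field.
From mathcomp Require Import ring zify.
Set Implicit Arguments. Unset Strict Implicit. Unset Printing Implicit Defensive.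
Import GRing.Theory.
Local Open Scope ring_scope.

(* Lemma 3.9: for a in F_q^* (q = 3^m, |F| = q^2) and b in F, the product
   Q(t) Tr(bt), with Q(t) = Tr(a t^(q+1)), lies in the F_3-span C_3(D_d) of
   the supports of the minimum-weight codewords of C(2m,3).
   1. The trace takes values in the prime field F_3 (embedded by ofF3), so
      Tr3 is additive, and completing the square gives
      Q(t + s) = Q(t) + Tr(2a s^q t) + Q(s).
   2. Counting: t^(q+1) lies in F_q, a nonzero element of F_q has at most
      q + 1 such preimages, and on F_q the trace is 2 Tr_m, whose fibres have
      at most q/3 elements.  So #{Q = c} <= (q/3)(q+1) for c <> 0 and
      #{Q = 0} <= 1 + (q/3 - 1)(q+1); the three fibres cover F, forcing
      #{Q = c} = (q/3)(q+1) for c <> 0.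
   3. By the shift identity every nonzero codeword has at most (q/3)(q+1)
      zeros, and the words Q(t + s) + e (e <> 0) reach this bound: they have
      minimum weight d.
   4. Over F_3 the square of a word is the incidence vector of its support,
      and Q(t) Tr(bt) is an explicit F_3-combination of the squares of the
      four minimum-weight words Q(t +- s) +- 1 where 2a s^q = b. *)

Lemma F3_cases (k : 'F_3) : k = 0 \/ k = 1 \/ k = 2%:R.
Proof. by case: k => [[|[|[|//]]] ?]; [left|right;left|right;right]; apply: val_inj. Qed.

Lemma sqrF3 (x : 'F_3) : x ^+ 2 = (x != 0)%:R.
Proof. by case: (F3_cases x) => [->|[->|->]]; apply: val_inj. Qed.

Lemma F3_product_as_squares (x l k : 'F_3) :
  x * l = (k - 1) * (x + l + k + 1) ^+ 2 + (- 1 - k) * (x + l + k + - 1) ^+ 2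
        + ((1 - k) * (x - l + k + 1) ^+ 2 + (1 + k) * (x - l + k + - 1) ^+ 2).
Proof.
by case: (F3_cases x) => [->|[->|->]]; case: (F3_cases l) => [->|[->|->]];
   case: (F3_cases k) => [->|[->|->]]; apply: val_inj.
Qed.

Lemma fibre_sizes_tight (r N0 N1 N2 : nat) : (0 < r)%N ->
  (N0 + N1 + N2 = (3 * r) * (3 * r))%N ->
  (N0 <= 1 + (r - 1) * (3 * r).+1)%N -> (N1 <= r * (3 * r).+1)%N ->
  (N2 <= r * (3 * r).+1)%N ->
  N1 = (r * (3 * r).+1)%N /\ N2 = (r * (3 * r).+1)%N.
Proof. by move=> *; split; nia. Qed.

Lemma card_F3_fibres (T : finType) (f : T -> 'F_3) :
  (#|[set t | f t == 0%R]| + #|[set t | f t == 1%R]| + #|[set t | f t == 2%:R]|)%N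
  = #|T|.
Proof.
rewrite -[RHS]sum1_card (partition_big f predT) // !big_ord_recl big_ord0 /=.
rewrite addn0 addnA.
by congr (_ + _ + _); rewrite -sum1_card; apply: eq_bigl => t; rewrite inE;
   congr (f t == _); apply: val_inj.
Qed.

Section RootCounting.

Variable F : finFieldType.

(* The equation sum_(i<n) (w t)^(3^i) = k of degree 3^(n-1) has at most
   3^(n-1) solutions when w <> 0. *)
Lemma additive_fibre_bound n (w k : F) : (0 < n)%N -> w != 0 ->
  (#|[set t : F | (\sum_(i < n) (w * t) ^+ (3 ^ i) == k)%R]| <= 3 ^ n.-1)%N.
Proof.
move=> n_gt0 w_neq0; have n1_lt : (n.-1 < n)%N by rewrite prednK.
pose p : {poly F} := \sum_(i < n) (w ^+ (3 ^ i)) *: 'X^(3 ^ i) - k%:P.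
have p_eval t : p.[t] = \sum_(i < n) (w * t) ^+ (3 ^ i) - k.
  rewrite /p hornerD hornerN hornerC horner_sum; congr (_ - _).
  by apply: eq_bigr => i _; rewrite hornerZ hornerXn exprMn.
have p_size : (size p <= (3 ^ n.-1).+1)%N.
  rewrite /p (leq_trans (size_add _ _)) // geq_max size_opp size_polyC.
  rewrite (leq_trans (leq_b1 _)) ?ltnS ?expn_gt0 // andbT.
  apply: (leq_trans (size_sum _ _ _)); apply/bigmax_leqP => i _.
  rewrite (leq_trans (size_scale_leq _ _)) // size_polyXn ltnS leq_exp2l //.
  by rewrite -ltnS prednK.
have p_lead : p`_(3 ^ n.-1) = w ^+ (3 ^ n.-1).
  rewrite /p coefB coefC expn_eq0 /= subr0 coef_sum.
  rewrite (bigD1 (Ordinal n1_lt)) //= coefZ coefXn eqxx mulr1.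
  rewrite big1 ?addr0 // => i ne; rewrite coefZ coefXn eqn_exp2l //.
  suff /negbTE -> : n.-1 != i by rewrite mulr0.
  by rewrite eq_sym; apply: contra ne => /eqP e; apply/eqP/val_inj.
have p_neq0 : p != 0.
  apply: contra_neq w_neq0 => p0; move: p_lead; rewrite p0 coef0.
  by move/esym/eqP; rewrite expf_eq0 => /andP[_ /eqP].
rewrite cardE -ltnS (leq_trans _ p_size) //; apply: max_poly_roots => //.
  by apply/allP => t; rewrite mem_enum inE /root p_eval subr_eq0.
exact: enum_uniq.
Qed.

Lemma pow_fibre_bound n (u : F) :
  (#|[set t : F | (t ^+ n.+1 == u)%R]| <= (if (u == 0)%R then 1 else n.+1))%N.
Proof.
have [->|_] := eqVneq u 0.
  rewrite (_ : [set t : F | _] = [set 0]) ?cards1 //.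
  by apply/setP => t; rewrite !inE expf_eq0.
pose p : {poly F} := 'X^(n.+1) - u%:P.
have p_size : size p = n.+2 by rewrite size_XnsubC.
have p_neq0 : p != 0 by rewrite -size_poly_eq0 p_size.
rewrite cardE -ltnS -p_size; apply: max_poly_roots => //; last exact: enum_uniq.
by apply/allP => t; rewrite mem_enum inE /root !hornerE subr_eq0.
Qed.

Lemma card_translate (P : pred F) (s : F) :
  #|[set t | P (t + s)]| = #|[set t | P t]|.
Proof.
rewrite -(card_imset _ (addIr (- s))); apply: eq_card => u; rewrite inE.
apply/idP/imsetP => [Pu|[t]]; first by exists (u + s); rewrite ?inE ?addrK.
by rewrite inE => Pt ->; rewrite subrK.
Qed.

End RootCounting.

Section CharacteristicThree.

Variable F : finFieldType.
Hypothesis pcharF : (3 \in [pchar F])%N.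

Definition ofF3 (k : 'F_3) : F := (k : nat)%:R.

Lemma ofF3D (x y : 'F_3) : ofF3 (x + y) = ofF3 x + ofF3 y.
Proof.
rewrite /ofF3 -natrD -(GRing.natr_mod_pchar pcharF (x + y)%N).
by case: (F3_cases x) => [->|[->|->]]; case: (F3_cases y) => [->|[->|->]].
Qed.

Lemma ofF3_inj : injective ofF3.
Proof.
have two_neq0 : (2%:R : F) != 0 by apply/negP; rewrite -(dvdn_pcharf pcharF).
have two_neq1 : (2%:R : F) != 1.
  by rewrite -subr_eq0 -(natrB F (isT : (1 <= 2)%N)); exact: oner_neq0.
have val2 : nat_of_ord (2%:R : 'F_3) = 2%N by [].
move=> x y; rewrite /ofF3.
case: (F3_cases x) => [->|[->|->]]; case: (F3_cases y) => [->|[->|->]];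
  rewrite ?val2 // => /eqP; rewrite ?mulr0n ?mulr1n ?(eq_sym 0) ?(eq_sym 1 2%:R)
    ?oner_eq0 ?(negbTE two_neq0) ?(negbTE two_neq1) //.
Qed.

Lemma ofF3_2 : ofF3 2%:R = -1.
Proof.
rewrite /ofF3 (_ : nat_of_ord (2%:R : 'F_3) = 2%N) //.
by apply/eqP; rewrite -subr_eq0 opprK -(natrD F 2 1) (pcharf0 pcharF).
Qed.

Lemma pchar_nat_exp3 n : ([pchar F]).-nat (3 ^ n)%N.
Proof. by rewrite (eq_pnat _ (pcharf_eq pcharF)) pnatX pnat_id. Qed.

Lemma frobeniusD n (x y : F) : (x + y) ^+ (3 ^ n) = x ^+ (3 ^ n) + y ^+ (3 ^ n).
Proof. by rewrite exprDn_pchar // pchar_nat_exp3. Qed.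

Lemma frobeniusN n (x : F) : (- x) ^+ (3 ^ n) = - x ^+ (3 ^ n).
Proof. by rewrite exprNn_pchar // pchar_nat_exp3. Qed.

Lemma double_eq_opp (x : F) : x + x = - x.
Proof.
apply/eqP; rewrite -addr_eq0 -(mulrn_pchar pcharF x).
by rewrite !mulrS mulr0n addr0 addrA.
Qed.

Variable m : nat.
Hypothesis cardF : #|F| = (3 ^ (2 * m))%N.

Lemma frobenius_period (x : F) : x ^+ (3 ^ (2 * m)) = x.
Proof. by rewrite -cardF expf_card. Qed.

Lemma frobenius_half_invol (x : F) : (x ^+ (3 ^ m)) ^+ (3 ^ m) = x.
Proof. by rewrite -exprM -expnD addnn -mul2n frobenius_period. Qed.

Lemma TrFD (x y : F) : TrF m (x + y) = TrF m x + TrF m y.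
Proof. by rewrite /TrF -big_split; apply: eq_bigr => i _; rewrite frobeniusD. Qed.

Lemma TrF0 : TrF m (0 : F) = 0.
Proof. by rewrite /TrF big1 // => i _; rewrite expr0n expn_eq0. Qed.

Lemma TrF_cube_arg (x : F) : TrF m (x ^+ 3) = TrF m x.
Proof.
have -> : TrF m (x ^+ 3) = \sum_(i < 2 * m) x ^+ (3 ^ i.+1).
  by apply: eq_bigr => i _; rewrite -exprM expnS.
rewrite /TrF; case: (posnP m) => [->|m_gt0]; first by rewrite !big_ord0.
have -> : (2 * m = (2 * m).-1.+1)%N by rewrite prednK // muln_gt0.
rewrite big_ord_recr big_ord_recl /= prednK ?muln_gt0 // frobenius_period.
by rewrite addrC.
Qed.

Lemma TrF_frobenius n (x : F) : TrF m (x ^+ (3 ^ n)) = TrF m x.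
Proof.
elim: n => [|n IHn]; first by rewrite expr1.
by rewrite expnSr exprM TrF_cube_arg.
Qed.

(* Hence the trace lies in the prime field: it is a root of X^3 - X. *)
Lemma TrF_cube (x : F) : TrF m x ^+ 3 = TrF m x.
Proof.
have frob3 := big_morph (fun z : F => z ^+ (3 ^ 1)) (frobeniusD 1) (expr0n _ _).
rewrite -[in RHS]TrF_cube_arg /TrF frob3 /=.
by apply: eq_bigr => i _; rewrite expn1 exprAC.
Qed.

Lemma ofF3_Tr3 (x : F) : ofF3 (Tr3 m x) = TrF m x.
Proof.
set y := TrF m x.
have y_root : y * (y - 1) * (y + 1) = 0.
  have -> : y * (y - 1) * (y + 1) = y ^+ 3 - y by ring.
  by rewrite TrF_cube subrr.
have [k ofF3k] : exists k : 'F_3, ofF3 k = y.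
  move/eqP: y_root; rewrite !mulf_eq0 subr_eq0 addr_eq0.
  case/orP => [/orP[]|] /eqP ->; first by exists 0.
  - by exists 1.
  - by exists 2%:R; rewrite ofF3_2.
rewrite /Tr3; case: pickP => [k' /eqP //|/(_ k)].
by rewrite -/(ofF3 k) ofF3k eqxx.
Qed.

Lemma Tr3D (x y : F) : Tr3 m (x + y) = Tr3 m x + Tr3 m y.
Proof. by apply: ofF3_inj; rewrite ofF3D !ofF3_Tr3 TrFD. Qed.

Lemma Tr30 : Tr3 m (0 : F) = 0.
Proof. by apply: ofF3_inj; rewrite ofF3_Tr3 TrF0. Qed.

Lemma Tr3N (x : F) : Tr3 m (- x) = - Tr3 m x.
Proof. by apply/eqP; rewrite -addr_eq0 -Tr3D addrC subrr Tr30. Qed.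

Lemma Tr3_eq (x : F) (c : 'F_3) : (Tr3 m x == c) = (TrF m x == ofF3 c).
Proof. by rewrite -ofF3_Tr3; apply/eqP/eqP => [->|/ofF3_inj]. Qed.

Definition Q (a t : F) : 'F_3 := Tr3 m (a * t ^+ (3 ^ m + 1)).

Lemma TrF_quad_shift (a s t : F) : a ^+ (3 ^ m) = a ->
  TrF m (a * (t + s) ^+ (3 ^ m + 1)) =
  TrF m (a * t ^+ (3 ^ m + 1)) + TrF m ((a + a) * s ^+ (3 ^ m) * t)
  + TrF m (a * s ^+ (3 ^ m + 1)).
Proof.
move=> aq.
have cross : TrF m (a * t ^+ (3 ^ m) * s) = TrF m (a * s ^+ (3 ^ m) * t).
  rewrite -(TrF_frobenius m (a * t ^+ (3 ^ m) * s)) !exprMn aq.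
  by rewrite frobenius_half_invol mulrAC.
have -> : a * (t + s) ^+ (3 ^ m + 1) =
    a * t ^+ (3 ^ m + 1) + (a * t ^+ (3 ^ m) * s + a * s ^+ (3 ^ m) * t)
    + a * s ^+ (3 ^ m + 1).
  by rewrite !exprD !expr1 frobeniusD; ring.
by rewrite !TrFD cross -TrFD !mulrDl.
Qed.

Lemma quad_shift (a s t : F) : a ^+ (3 ^ m) = a ->
  Q a (t + s) = Q a t + Tr3 m ((a + a) * s ^+ (3 ^ m) * t) + Q a s.
Proof.
by move=> aq; apply: ofF3_inj; rewrite !ofF3D !ofF3_Tr3 TrF_quad_shift.
Qed.

Lemma Q_opp (a t : F) : Q a (- t) = Q a t.
Proof. by rewrite /Q exprD expr1 frobeniusN mulrNN -{2}(expr1 t) -exprD. Qed.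

Lemma shift_for_linear (a b : F) : a != 0 ->
  (a + a) * ((b / (a + a)) ^+ (3 ^ m)) ^+ (3 ^ m) = b.
Proof.
by move=> a_neq0; rewrite frobenius_half_invol mulrC divfK // double_eq_opp oppr_eq0.
Qed.

Hypothesis m_gt0 : (0 < m)%N.

(* |F| = (3r)^2 with r = q/3. *)
Lemma cardF_thirds : #|F| = (3 * 3 ^ m.-1 * (3 * 3 ^ m.-1))%N.
Proof. by rewrite cardF -expnS prednK // mulnC expnM expnS expn1. Qed.

(* On the subfield F_q the trace Tr_2m is twice, i.e. minus, Tr_m. *)
Lemma TrF_subfield (x : F) : x ^+ (3 ^ m) = x ->
  TrF m x = - \sum_(i < m) x ^+ (3 ^ i).
Proof.
move=> xq; rewrite /TrF mul2n -addnn big_split_ord /= -double_eq_opp.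
by congr (_ + _); apply: eq_bigr => i _; rewrite expnD exprM xq.
Qed.

Section QuadraticFibres.

Variable a : F.
Hypotheses (aq : a ^+ (3 ^ m) = a) (a_neq0 : a != 0).

Lemma subfield_trace_fibre (c : 'F_3) :
  (#|[set u : F | ((u ^+ (3 ^ m) == u) && (Tr3 m (a * u) == c))%R]| <= 3 ^ m.-1)%N.
Proof.
apply: (leq_trans _ (additive_fibre_bound (- ofF3 c) m_gt0 a_neq0)).
apply/subset_leq_card/subsetP => u; rewrite !inE => /andP[/eqP uq].
rewrite Tr3_eq TrF_subfield; last by rewrite exprMn aq uq.
by rewrite eqr_oppLR.
Qed.

(* Grouping t by u = t^(q+1), which lies in F_q: each nonzero u has at most
   q + 1 preimages and u = 0 has one. *)
Lemma quad_fibre_le (c : 'F_3) :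
  (#|[set t | (Q a t == c)%R]| <=
   \sum_(u in [set u : F | ((u ^+ (3 ^ m) == u) && (Tr3 m (a * u) == c))%R])
     (if (u == 0)%R then 1 else (3 ^ m).+1))%N.
Proof.
rewrite -sum1_card (partition_big (fun t => t ^+ (3 ^ m + 1))
  (mem [set u : F | ((u ^+ (3 ^ m) == u) && (Tr3 m (a * u) == c))%R])) /=.
  apply: leq_sum => u _; rewrite sum1_card.
  apply: leq_trans (pow_fibre_bound _ u); apply/subset_leq_card/subsetP => t.
  by rewrite !inE addn1 => /andP[_].
move=> t; rewrite !inE => ->; rewrite andbT -exprM mulnC exprM.
by rewrite !exprD !expr1 frobenius_half_invol mulrC.
Qed.

(* Hence #{Q a = c} <= (q/3)(q+1) for c <> 0; for c = 0 the point u = 0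
   contributes only t = 0. *)
Lemma quad_fibre_bound (c : 'F_3) :
  (#|[set t | (Q a t == c)%R]| <=
   (if (c == 0)%R then 1 + (3 ^ m.-1 - 1) * (3 ^ m).+1
    else 3 ^ m.-1 * (3 ^ m).+1))%N.
Proof.
apply: (leq_trans (quad_fibre_le c)).
set K := [set u : F | _]; have K_le := subfield_trace_fibre c; rewrite -/K in K_le.
have [c0|c_neq0] := eqVneq c 0.
  have K0 : (0 : F) \in K by rewrite inE expr0n expn_eq0 eqxx mulr0 Tr30 c0.
  rewrite (bigD1 0) //= eqxx leq_add2l.
  apply: (@leq_trans (\sum_(u in K :\ 0%R) (3 ^ m).+1)%N).
    rewrite [X in (_ <= X)%N](eq_bigl (fun u => (u \in K) && (u != 0))).
      by apply: leq_sum => u /andP[_ /negbTE ->].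
    by move=> u; rewrite !inE andbC.
  rewrite sum_nat_const leq_mul2r (cardsD1 0 K) K0 /= in K_le *.
  by rewrite leq_subRL ?expn_gt0.
apply: (@leq_trans (\sum_(u in K) (3 ^ m).+1)%N).
  by apply: leq_sum => u _; case: eqP.
by rewrite sum_nat_const leq_mul2r K_le orbT.
Qed.

(* The three fibres of Q a cover F, so the nonzero ones meet their bound. *)
Lemma quad_fibre_exact (e : 'F_3) : e != 0 ->
  #|[set t | (Q a t == e)%R]| = (3 ^ m.-1 * (3 ^ m).+1)%N.
Proof.
have q3 : (3 ^ m = 3 * 3 ^ m.-1)%N by rewrite -expnS prednK.
have := card_F3_fibres (Q a); rewrite cardF_thirds.
have := quad_fibre_bound 0; have := quad_fibre_bound 1; have := quad_fibre_bound 2%:R.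
rewrite /= q3 => le2 le1 le0 total.
have [] := fibre_sizes_tight (expn_gt0 3 m.-1) total le0 le1 le2; rewrite -q3.
by case: (F3_cases e) => [->|[->|->]].
Qed.

End QuadraticFibres.

Lemma wt_add_zeros (c : {ffun F -> 'F_3}) :
  (wt c + #|[set t | (c t == 0)%R]|)%N = #|F|.
Proof.
rewrite /wt -(cardsC [set t | c t != 0]); congr (_ + _).
by apply: eq_card => t; rewrite !inE negbK.
Qed.

Lemma affine_zeros_bound (b : F) (h : 'F_3) : b != 0 ->
  (#|[set t | (Tr3 m (b * t) + h == 0)%R]| <= 3 ^ (2 * m).-1)%N.
Proof.
move=> b_neq0; apply: leq_trans (additive_fibre_bound (ofF3 (- h)) _ b_neq0).
  apply/subset_leq_card/subsetP => t; rewrite !inE addr_eq0.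
  by rewrite Tr3_eq.
by rewrite muln_gt0.
Qed.

(* For a <> 0 in F_q, Q a t + Tr(bt) + h is a translate of Q a + k, so it
   has at most (q/3)(q+1) zeros. *)
Lemma quad_affine_zeros_bound (a b : F) (h : 'F_3) :
  a ^+ (3 ^ m) = a -> a != 0 ->
  (#|[set t | (Q a t + Tr3 m (b * t) + h == 0)%R]| <= 3 ^ m.-1 * (3 ^ m).+1)%N.
Proof.
move=> aq a_neq0; pose s := (b / (a + a)) ^+ (3 ^ m); pose k : 'F_3 := Q a s - h.
rewrite (_ : [set t | _] = [set t | (Q a (t + s) == k)%R]); last first.
  apply/setP => t; rewrite !inE quad_shift // shift_for_linear // /k addr_eq0.
  by rewrite [Q a s - h]addrC (inj_eq (addIr _)).
rewrite (card_translate (fun t => Q a t == k)).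
apply: leq_trans (quad_fibre_bound aq a_neq0 k) _.
case: eqP => // _; have r_gt0 : (0 < 3 ^ m.-1)%N by rewrite expn_gt0.
by move: (3 ^ m.-1)%N (3 ^ m)%N r_gt0 => r q; nia.
Qed.

(* Every nonzero codeword has at most (q/3)(q+1) zeros: it is a nonzero
   constant, a nonconstant affine word, or of the shape above. *)
Lemma codeword_zeros_bound (c : {ffun F -> 'F_3}) :
  c \in codeC F m -> c != 0 ->
  (#|[set t | (c t == 0)%R]| <= 3 ^ m.-1 * (3 ^ m).+1)%N.
Proof.
rewrite inE => /existsP[a /existsP[b /existsP[h /andP[/eqP aq /eqP ->]]]] c_neq0.
rewrite (_ : [set t | _] = [set t | (Q a t + Tr3 m (b * t) + h == 0)%R]); last first.
  by apply/setP => t; rewrite !inE ffunE Tr3D.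
have [a0|a_neq0] := eqVneq a 0; last exact: quad_affine_zeros_bound.
have Q0 t : Q 0 t = 0 by rewrite /Q mul0r Tr30.
subst a; have [b0|b_neq0] := eqVneq b 0.
  rewrite (_ : [set t | _] = set0) ?cards0 //.
  apply/setP => t; rewrite !inE Q0 b0 mul0r Tr30 !add0r.
  apply: contraNF c_neq0 => /eqP h0; apply/eqP/ffunP => t'.
  by rewrite !ffunE b0 !mul0r addr0 Tr30 h0 add0r.
apply: leq_trans (_ : 3 ^ (2 * m).-1 <= _)%N.
  rewrite (_ : [set t | _] = [set t | (Tr3 m (b * t) + h == 0)%R]).
    exact: affine_zeros_bound.
  by apply/setP => t; rewrite !inE Q0 add0r.
rewrite (_ : (2 * m).-1 = m.-1 + m)%N; last by lia.
by rewrite expnD leq_mul2l leqnSn orbT.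
Qed.

Lemma translate_in_code (a s : F) (e : 'F_3) : a ^+ (3 ^ m) = a ->
  [ffun t => Q a (t + s) + e] \in codeC F m.
Proof.
move=> aq; rewrite inE; apply/existsP; exists a.
apply/existsP; exists ((a + a) * s ^+ (3 ^ m)); apply/existsP; exists (Q a s + e).
rewrite /inFm aq eqxx; apply/eqP/ffunP => t; rewrite !ffunE quad_shift // Tr3D.
by rewrite !addrA.
Qed.

(* For e <> 0 they meet the zero bound, hence have minimum weight d. *)
Lemma translate_min_weight (a s : F) (e : 'F_3) :
  a ^+ (3 ^ m) = a -> a != 0 -> e != 0 ->
  min_weight_word m [ffun t => Q a (t + s) + e].
Proof.
move=> aq a_neq0 e_neq0; set X := [ffun t => _].
have zeros_X : #|[set t | (X t == 0)%R]| = (3 ^ m.-1 * (3 ^ m).+1)%N.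
  rewrite (_ : [set t | _] = [set t | (Q a (t + s) == - e)%R]); last first.
    by apply/setP => t; rewrite !inE ffunE addr_eq0.
  rewrite (card_translate (fun t => Q a t == - e)).
  by rewrite quad_fibre_exact // oppr_eq0.
have X_neq0 : X != 0.
  apply/eqP => X0; move: zeros_X; rewrite X0.
  rewrite (_ : [set t | _] = setT) ?cardsT; last by apply/setP => t; rewrite !inE ffunE.
  have q3 : (3 ^ m = 3 * 3 ^ m.-1)%N by rewrite -expnS prednK.
  have r_gt0 : (0 < 3 ^ m.-1)%N by rewrite expn_gt0.
  rewrite cardF_thirds q3.
  by move: (3 ^ m.-1)%N r_gt0 => r r_gt0; nia.
rewrite /min_weight_word translate_in_code // X_neq0.
apply/forall_inP => c c_code; apply/implyP => c_neq0.
have := codeword_zeros_bound c_code c_neq0.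
have := wt_add_zeros X; have := wt_add_zeros c; rewrite zeros_X; lia.
Qed.

End CharacteristicThree.

Section DesignCode.

Variables (F : finFieldType) (m : nat).

Lemma design_code_add (v w : {ffun F -> 'F_3}) :
  in_code_of_design m v -> in_code_of_design m w ->
  in_code_of_design m [ffun t => v t + w t].
Proof.
move=> [lv lvE] [lw lwE]; exists (fun S => lv S + lw S) => t.
by rewrite ffunE lvE lwE -big_split; apply: eq_bigr => S _; rewrite mulrDl.
Qed.

(* The square of a minimum-weight word is the incidence vector of its
   support, a block of D_d; so its multiples lie in C_3(D_d). *)
Lemma design_code_scaled_square (c : {ffun F -> 'F_3}) (k : 'F_3) :
  min_weight_word m c -> in_code_of_design m [ffun t => k * c t ^+ 2].
Proof.
move=> c_min; set B := [set t | c t != 0].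
have B_block : B \in blocksD F m by apply/imsetP; exists c; rewrite ?inE.
exists (fun S => if S == B then k else 0) => t.
rewrite (bigD1 B) //= eqxx big1 ?addr0; last first.
  by move=> S /andP[_ /negbTE ->]; rewrite mul0r.
by rewrite !ffunE inE sqrF3.
Qed.

End DesignCode.

Theorem lemma3p9 (m : nat) (F : finFieldType) :
  (2 <= m)%N -> (3 \in [pchar F])%N -> #|F| = (3 ^ (2 * m))%N ->
  forall a b : F, inFm m a -> a != 0 ->
    in_code_of_design m
      [ffun t => Tr3 m (a * t ^+ (3 ^ m + 1)) * Tr3 m (b * t)].
Proof.
move=> m_ge2 pcharF cardF a b /eqP aq a_neq0.
have m_gt0 : (0 < m)%N by lia.
(* Choose s with 2a s^q = b, so that Q(t +- s) = Q(t) +- Tr(bt) + Q(s). *)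
pose s := (b / (a + a)) ^+ (3 ^ m).
have lin_s : (a + a) * s ^+ (3 ^ m) = b by apply: shift_for_linear.
have lin_ns : (a + a) * (- s) ^+ (3 ^ m) = - b.
  by rewrite frobeniusN // mulrN lin_s.
set k := Q m a s.
have min_word (r : F) (e : 'F_3) : e != 0 ->
    min_weight_word m [ffun t => Q m a (t + r) + e].
  exact: translate_min_weight.
have := design_code_add
  (design_code_add (design_code_scaled_square (k - 1) (min_word s 1 isT))
                   (design_code_scaled_square (- 1 - k) (min_word s (- 1) isT)))
  (design_code_add (design_code_scaled_square (1 - k) (min_word (- s) 1 isT))
                   (design_code_scaled_square (1 + k) (min_word (- s) (- 1) isT))).
congr in_code_of_design; apply/ffunP => t; rewrite !ffunE !quad_shift //.
rewrite lin_s lin_ns Q_opp // mulNr Tr3N // -/k.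
exact: esym (F3_product_as_squares _ _ k).
Qed.
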